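(* Algorithm 2 is monotonic. Moreover, for a connected graph $G$ with $n\ge2$ nodes, diameter $D$, and nonnegative integer loads with initial discrepancy $K$, after at most $(8nD+1)\ln(\lceil nK^2/(2D^2)\rceil)+2nD^2$ rounds when $K\ge 2D$ (and at most $2nD^2$ rounds when $K<2D$), hence in $O(nD\log(nK/D)+nD^2)$ time, the graph reaches a $1$-Balanced state, after which the loads never change.
   Context: $G=(V,E)$ is an undirected connected graph, $n=|V|$, $D$ its diameter; each node $u$ holds an integer load $load(u)\ge 0$. $L_{max},L_{min}$ denote the current maximum and minimum load and the discrepancy is $K=L_{max}-L_{min}$. A state is $1$-Balanced if every two adjacent nodes have loads differing by at most $1$. Algorithm 2 (single proposal, discrete) proceeds in synchronous rounds; in each round, using the loads at the start of the round: (1) every node $u$ having at least one neighbor $v$ with $load(v)\le load(u)-2$ picks the first neighbor $v$ (in a fixed order of its neighbors) maximizing $load(u)-load(v)$ and sends $v$ a proposal of value $p_{uv}=\lfloor (load(u)-load(v))/2\rfloor$; (2) every node that received at least one proposal accepts exactly one proposal of maximum value; (3) all accepted transfers are executed simultaneously (each accepted proposal $p_{wu}$ moves $p_{wu}$ from $w$ to $u$), and nodes report their new loads to neighbors. An algorithm is monotonic if in every execution (a) each load transfer goes from a higher-loaded node to a less-loaded one, and (b) the maximum load never increases and the minimum load never decreases. *)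

From Stdlib Require Import Reals.
From mathcomp Require Import all_boot.
Set Implicit Arguments. Unset Strict Implicit. Unset Printing Implicit Defensive.

Section LoadBalancing.
Variable T : finType.
Variable e : rel T.
Variable nb : T -> seq T.        (* fixed order of the neighbours of each node *)

Definition load := T -> nat.

Definition simple_graph := symmetric e /\ irreflexive e.
Definition connected_graph := forall u v : T, connect e u v.
Definition nb_order := forall u, uniq (nb u) /\ forall v, (v \in nb u) = e u v.

Definition walkb (k : nat) (u v : T) : bool :=
  [exists p : k.-tuple T, path e u p && (last u p == v)].
Definition dist (u v : T) : nat := find (fun k => walkb k u v) (iota 0 #|T|).
Definition diameter : nat := \max_(u : T) \max_(v : T) dist u v.

Definition Lmax (L : load) : nat := \max_(u : T) L u.
Definition Lmin (L : load) : nat := \big[minn/Lmax L]_(u : T) L u.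
Definition discrepancy (L : load) : nat := Lmax L - Lmin L.

Definition one_balanced (L : load) : Prop :=
  forall u v, e u v -> L u <= L v + 1 /\ L v <= L u + 1.

Definition proposes (L : load) (u : T) : bool := has (fun v => L v + 2 <= L u) (nb u).
Definition maxgap (L : load) (u : T) : nat := \max_(v <- nb u) (L u - L v).
Definition target (L : load) (u : T) : option T :=
  if proposes L u then Some (nth u (nb u) (find (fun v => L u - L v == maxgap L u) (nb u)))
  else None.
Definition pval (L : load) (u v : T) : nat := (L u - L v) %/ 2.

(* Step (2): acc v = Some w means v accepts the proposal of w. Any choice
   among the proposals of maximum value is allowed. *)
Definition valid_acc (L : load) (acc : T -> option T) : Prop :=
  forall v,
    (acc v = None <-> forall u, target L u <> Some v) /\
    (forall w, acc v = Some w ->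
       target L w = Some v /\
       forall u, target L u = Some v -> pval L u v <= pval L w v).

Definition next (L : load) (acc : T -> option T) : load := fun u =>
  L u + (if acc u is Some w then pval L w u else 0)
      - \sum_(v : T | acc v == Some u) pval L u v.

(* An execution of Algorithm 2: X t = loads after t rounds, A t = acceptances of round t+1 *)
Definition execution (X : nat -> load) (A : nat -> T -> option T) : Prop :=
  forall t, valid_acc (X t) (A t) /\ X t.+1 = next (X t) (A t).

End LoadBalancing.

From Pilot Require Import Defs.
From Stdlib Require Import Reals Lra Classical.
From mathcomp Require Import all_boot zify ring.
Set Implicit Arguments. Unset Strict Implicit. Unset Printing Implicit Defensive.

(** The proof follows the potential-function argument of the paper, with
    the potential  Ψ(L) = n·Σ_u L(u)² − (Σ_u L(u))²  (n² times the variance).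
    - One round: every accepted proposal goes from w to a target v with
      L v + 2·p ≤ L w; the total load is conserved and Σ L² drops by at
      least 2·Σ_v p_v², where p_v is the value accepted by v.
    - Contraction: along a shortest path from a maximum to a minimum node,
      every node is the target of at most 3 path nodes, so by Cauchy–Schwarz
      (K − D)² ≤ 6D·(drop of Σ L²).  Hence while Ψ > n²D² (which forces
      K > 2D), Ψ shrinks by the factor 1 − 1/(6nD) per round (phase 1).
    - Once Ψ ≤ n²D², every unbalanced round lowers Ψ by ≥ 2n (phase 2),
      and a 1-balanced state is a fixed point.
    - Finally the nat estimates of the two phases are turned into the real
      bound through ln(a − 1) ≤ ln a − 1/a. *)

Lemma amgm x y : 2 * x * y <= x ^ 2 + y ^ 2.
Proof.
case: (leqP x y) => h; [have -> : y = x + (y - x) by lia | have -> : x = y + (x - y) by lia].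
all: nia.
Qed.

Lemma cauchy_schwarz (I : Type) (r : seq I) (a : I -> nat) :
  (\sum_(i <- r) a i) ^ 2 <= size r * \sum_(i <- r) a i ^ 2.
Proof.
elim: r => [|b r IH]; first by rewrite !big_nil.
have cross : 2 * a b * \sum_(i <- r) a i <= size r * a b ^ 2 + \sum_(i <- r) a i ^ 2.
  elim: r {IH} => [|c r IHr]; first by rewrite !big_nil; lia.
  rewrite !big_cons /=; have := amgm (a b) (a c); nia.
rewrite !big_cons /=; nia.
Qed.

Lemma cauchy_schwarz_ord k (a : nat -> nat) :
  (\sum_(i < k) a i) ^ 2 <= k * \sum_(i < k) a i ^ 2.
Proof.
rewrite -(big_mkord xpredT a) -(big_mkord xpredT (fun i => a i ^ 2)).
by have := cauchy_schwarz (index_iota 0 k) a; rewrite size_iota subn0.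
Qed.

Lemma telescope (f : nat -> nat) k : f 0 <= f k + \sum_(i < k) (f i - f i.+1).
Proof.
elim: k => [|k IH]; first by rewrite big_ord0; lia.
rewrite big_ord_recr /=.
have -> : \sum_(i < k) (f (widen_ord (leqnSn k) i) - f (widen_ord (leqnSn k) i).+1) =
          \sum_(i < k) (f i - f i.+1) by [].
lia.
Qed.

Lemma count_clustered (c : pred nat) k :
  (forall a b, a < k -> b < k -> c a -> c b -> a < b -> b < a + 3) ->
  count c (iota 0 k) <= 3.
Proof.
move=> H; rewrite -size_filter.
have srt : sorted ltn [seq i <- iota 0 k | c i].
  by apply: sorted_filter; [exact: ltn_trans | exact: iota_ltn_sorted].
have mem i : i \in [seq i <- iota 0 k | c i] -> i < k /\ c i.
  by rewrite mem_filter mem_iota add0n => /andP[-> /andP[_ ->]].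
case: [seq i <- iota 0 k | c i] srt mem => [|a [|b [|d [|f r]]]] //= srt mem.
move: srt => /and4P[ab bd df _].
have [ha ca] := mem a (mem_head _ _).
have [hf cf] : f < k /\ c f by apply: mem; rewrite !inE eqxx !orbT.
have := H a f ha hf ca cf; lia.
Qed.

Lemma bigmax_seq_attained (T : eqType) (s : seq T) (f : T -> nat) :
  s != [::] -> has (fun v => f v == \max_(v <- s) f v) s.
Proof.
elim: s => [|a s IH] //= _; rewrite big_cons.
case: s IH => [|b s] IH; first by rewrite big_nil maxn0 eqxx.
have /hasP[c cin /eqP hc] := IH isT.
case: (leqP (f a) (\max_(v <- b :: s) f v)) => h; last by apply/orP; left; apply/eqP; lia.
by apply/orP; right; apply/hasP; exists c => //; apply/eqP; rewrite hc; lia.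
Qed.

(** * One round of Algorithm 2 *)

Section Round.
Variables (T : finType) (e : rel T) (nb : T -> seq T).
Hypothesis Hnb : nb_order e nb.

Lemma maxgap_ge (L : load T) u v : e u v -> L u - L v <= maxgap nb L u.
Proof.
move=> euv; apply: (@leq_bigmax_seq _ _ xpredT (fun v => L u - L v)) => //.
by case: (Hnb u) => _ ->.
Qed.

Lemma target_spec (L : load T) u v : target nb L u = Some v ->
  [/\ e u v, L u - L v = maxgap nb L u & 2 <= maxgap nb L u].
Proof.
rewrite /target; case: ifP => // /hasP[v0 v0in hv0] [<-].
have ne : nb u != [::] by case: (nb u) v0in.
have /(nth_find u)/eqP hf := bigmax_seq_attained (fun v => L u - L v) ne.
have e0 : e u v0 by case: (Hnb u) => _ <-.
have := maxgap_ge L e0; split => //; last by lia.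
case: (Hnb u) => _ <-; apply: mem_nth; rewrite -has_find.
exact: bigmax_seq_attained.
Qed.

Lemma target_gap (L : load T) u v : target nb L u = Some v -> L v + 2 <= L u.
Proof. by move=> /target_spec [_ h1 h2]; lia. Qed.

Lemma target_exists (L : load T) u v : e u v -> L v + 2 <= L u ->
  exists y, target nb L u = Some y /\ L u - L v <= L u - L y.
Proof.
move=> euv h.
have hp : proposes nb L u by apply/hasP; exists v => //; case: (Hnb u) => _ ->.
case hy : (target nb L u) => [y|]; last by move: hy; rewrite /target hp.
by exists y; split => //; have [_ -> _] := target_spec hy; exact: maxgap_ge.
Qed.

Section Acceptance.
Variables (L : load T) (acc : T -> option T).
Hypothesis Hacc : valid_acc nb L acc.

Lemma acc_target v w : acc v = Some w -> target nb L w = Some v.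
Proof. by move=> h; case: (Hacc v) => _ /(_ w h) []. Qed.

Lemma acc_max v w u : acc v = Some w -> target nb L u = Some v -> pval L u v <= pval L w v.
Proof. by move=> h; case: (Hacc v) => _ /(_ w h) [] _; apply. Qed.

Lemma acc_exists u v : target nb L u = Some v -> exists w, acc v = Some w.
Proof.
move=> h; case hv: (acc v) => [w|]; first by exists w.
by case: (Hacc v) => [[/(_ hv) /(_ u)]].
Qed.

Lemma acc_gap v w : acc v = Some w -> L v + 2 * pval L w v <= L w.
Proof.
move=> /acc_target /target_gap h; rewrite /pval.
have := leq_divM (L w - L v) 2; rewrite mulnC; lia.
Qed.

Definition received v := if acc v is Some w then pval L w v else 0.
Definition sent u := \sum_(v | acc v == Some u) pval L u v.

(** At most one node accepts the (unique) proposal of u. *)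
Lemma sum_acceptors (F : T -> nat) u :
  \sum_(v | acc v == Some u) F v = oapp F 0 [pick v | acc v == Some u].
Proof.
case: pickP => [v0 /eqP h0 | h] /=; last by rewrite big_pred0.
rewrite (bigD1 v0) ?h0 ?eqxx //= big1 ?addn0 // => v /andP[/eqP hv ne].
move: (acc_target h0) (acc_target hv) => -> [E].
by rewrite E eqxx in ne.
Qed.

Lemma sum_by_receiver (G : T -> T -> nat) :
  \sum_u \sum_(v | acc v == Some u) G u v = \sum_v oapp (fun w => G w v) 0 (acc v).
Proof.
rewrite (exchange_big_dep xpredT) //=; apply: eq_bigr => v _.
case: (acc v) => [w|] /=; last by rewrite big_pred0.
rewrite (eq_bigl (fun u => u == w)) ?big_pred1_eq // => u.
by rewrite eq_sym; apply/eqP/eqP => [[]|->].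
Qed.

Lemma sent_cases u : sent u = 0 \/ exists v, acc v = Some u /\ sent u = pval L u v.
Proof.
rewrite /sent sum_acceptors; case: pickP => [v /eqP h|] /=; last by left.
by right; exists v.
Qed.

Lemma sent_sq u : sent u ^ 2 = \sum_(v | acc v == Some u) pval L u v ^ 2.
Proof. by rewrite /sent !sum_acceptors; case: pickP. Qed.

(** Load balance of a node (the truncated subtraction in [next] never bites). *)
Lemma next_balance u : Defs.next L acc u + sent u = L u + received u.
Proof.
rewrite /Defs.next -/(received u) -/(sent u).
case: (sent_cases u) => [->|[v [h ->]]]; first by lia.
have := acc_gap h; lia.
Qed.

Lemma sum_sent : \sum_u sent u = \sum_v received v.
Proof. by rewrite /sent sum_by_receiver; apply: eq_bigr => v _; rewrite /received; case: (acc v). Qed.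

Lemma sum_next : \sum_u Defs.next L acc u = \sum_u L u.
Proof.
have: \sum_u Defs.next L acc u + \sum_u sent u = \sum_u L u + \sum_u received u.
  by rewrite -!big_split /=; apply: eq_bigr => u _; apply: next_balance.
by rewrite sum_sent; lia.
Qed.

Lemma sumsq_next :
  \sum_u Defs.next L acc u ^ 2 + 2 * \sum_v received v ^ 2 <= \sum_u L u ^ 2.
Proof.
pose sender_load v := oapp L 0 (acc v).
have expand : \sum_u Defs.next L acc u ^ 2 + 2 * \sum_u (L u * sent u) <=
    \sum_u L u ^ 2 + 2 * \sum_u (L u * received u) + \sum_u received u ^ 2 + \sum_u sent u ^ 2.
  rewrite !big_distrr -!big_split /=; apply: leq_sum => u _; have := next_balance u; nia.
have out_flow : \sum_u L u * sent u = \sum_v sender_load v * received v.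
  under eq_bigr do rewrite /sent big_distrr /=.
  by rewrite sum_by_receiver; apply: eq_bigr => v _; rewrite /received /sender_load; case: (acc v).
have out_sq : \sum_u sent u ^ 2 = \sum_v received v ^ 2.
  under eq_bigr do rewrite sent_sq.
  by rewrite sum_by_receiver; apply: eq_bigr => v _; rewrite /received; case: (acc v).
have downhill : \sum_v L v * received v + 2 * \sum_v received v ^ 2 <=
                \sum_v sender_load v * received v.
  rewrite big_distrr -big_split /=; apply: leq_sum => v _.
  rewrite /sender_load /received; case hv: (acc v) => [w|] /=; last by lia.
  have := acc_gap hv; nia.
move: expand downhill; rewrite out_flow out_sq; lia.
Qed.

Lemma Lmin_le (L0 : load T) u : Lmin L0 <= L0 u.
Proof.
rewrite /Lmin; have : u \in index_enum T by rewrite mem_index_enum.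
elim: (index_enum T) => [|a r IH] //; rewrite big_cons inE => /orP[/eqP <-|/IH]; lia.
Qed.

Lemma next_le_Lmax u : Defs.next L acc u <= Lmax L.
Proof.
have Lmax_ge x : L x <= Lmax L by apply: leq_bigmax.
have := next_balance u; rewrite /received.
case hu: (acc u) => [w|]; last by have := Lmax_ge u; lia.
by have := acc_gap hu; have := Lmax_ge w; lia.
Qed.

Lemma Lmin_le_next u : Lmin L <= Defs.next L acc u.
Proof.
have := next_balance u; case: (sent_cases u) => [->|[v [h ->]]].
  by have := Lmin_le L u; lia.
by have := acc_gap h; have := Lmin_le L v; lia.
Qed.

End Acceptance.

(** In a 1-balanced state nobody proposes, so the loads do not change. *)
Lemma next_balanced (L : load T) acc :
  valid_acc nb L acc -> one_balanced e L -> forall u, Defs.next L acc u = L u.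
Proof.
move=> hv hb u.
have no_target w v : target nb L w <> Some v.
  move=> /target_spec [ewv h1 h2]; have := hb w v ewv; lia.
have none v : acc v = None by case: (hv v) => [[_ H] _]; apply: H => w; apply: no_target.
by rewrite /Defs.next none /= big_pred0 ?addn0 ?subn0 // => v; rewrite none.
Qed.

Lemma Lmax_next (L : load T) acc : valid_acc nb L acc -> Lmax (Defs.next L acc) <= Lmax L.
Proof. by move=> hv; apply/bigmax_leqP => u _; apply: next_le_Lmax. Qed.

Lemma Lmin_next (L : load T) acc : valid_acc nb L acc -> Lmin L <= Lmin (Defs.next L acc).
Proof.
move=> hv; case: (pickP (fun _ : T => true)) => [u _ | empty].
  rewrite [X in _ <= X]/Lmin; apply: (big_ind (fun x => Lmin L <= x)).
  - by apply: leq_trans (Lmin_le_next hv u) _; exact: leq_bigmax.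
  - by move=> x y hx hy; rewrite leq_min hx hy.
  - by move=> v _; apply: Lmin_le_next.
by rewrite /Lmin /Lmax !big_pred0.
Qed.

End Round.

(** * Shortest walks *)

Section Walks.
Variables (T : finType) (e : rel T).
Hypothesis Hsym : symmetric e.

Lemma walkb_path (x : T) (s : seq T) : path e x s -> walkb e (size s) x (last x s).
Proof. by move=> p; apply/existsP; exists (in_tuple s); rewrite p eqxx. Qed.

Lemma walk_exists (u v : T) : connect e u v -> has (fun k => walkb e k u v) (iota 0 #|T|).
Proof.
move=> /connectP[p pp ->]; case: (shortenP pp) => p' pp' uq _.
apply/hasP; exists (size p'); last exact: walkb_path.
rewrite mem_iota add0n /=.
have := max_card [pred x | x \in u :: p']; move/card_uniqP: uq => /= ->; lia.
Qed.

Lemma shortest_walk (u v : T) : connect e u v ->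
  exists s, [/\ path e u s, last u s = v, size s = Defs.dist e u v &
    forall j, j < size s -> ~~ walkb e j u v].
Proof.
move=> /walk_exists H.
have hf := nth_find 0 H; have lt := H; rewrite has_find size_iota in lt.
rewrite nth_iota // add0n in hf.
case/existsP: hf => p /andP[pp /eqP pl].
exists (val p); split => //; first by rewrite size_tuple.
move=> j; rewrite size_tuple => hj.
by have := before_find 0 hj; rewrite nth_iota ?add0n ?(ltn_trans hj) // => ->.
Qed.

Lemma dist_le_diameter u v : Defs.dist e u v <= diameter e.
Proof.
apply: leq_trans (@leq_bigmax _ (fun u => \max_(w : T) Defs.dist e u w) u).
exact: (@leq_bigmax _ (fun w => Defs.dist e u w) v).
Qed.

Lemma diameter_pos : connected_graph e -> 1 < #|T| -> 0 < diameter e.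
Proof.
move=> Hconn /card_gt1P[u [v [_ _ neq]]].
have [s [_ ls ss _]] := shortest_walk (Hconn u v).
apply: leq_trans (dist_le_diameter u v); rewrite -ss lt0n.
by apply: contra neq => /nilP s0; rewrite -ls s0.
Qed.

Lemma last_take (x0 : T) (s : seq T) a : a <= size s ->
  last x0 (take a s) = nth x0 (x0 :: s) a.
Proof.
move=> ha; rewrite (last_nth x0) size_take.
case: a ha => [|a] ha /=; first by case: ifP => // /negbT; rewrite -leqNgt leqn0 => /eqP ->.
have -> : (if a.+1 < size s then a.+1 else size s) = a.+1 by case: ifP => // /negbT; lia.
by rewrite /= nth_take.
Qed.

Lemma shortcut (x0 y : T) (s : seq T) a b :
  path e x0 s -> b <= size s -> a + 3 <= b ->
  e (nth x0 (x0 :: s) a) y -> e (nth x0 (x0 :: s) b) y ->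
  exists j, j < size s /\ walkb e j x0 (last x0 s).
Proof.
move=> ps hb hab ea eb.
set s' := take a s ++ y :: nth x0 (x0 :: s) b :: drop b s.
have ha : a <= size s by lia.
exists (size s'); split.
  by rewrite /s' size_cat size_take /= size_drop; case: ifP => h; lia.
have -> : last x0 s = last x0 s'.
  by rewrite /s' last_cat /= -(last_take x0 hb) -last_cat cat_take_drop.
apply: walkb_path; rewrite /s' cat_path last_take //.
have := ps; rewrite -{1}(cat_take_drop a s) cat_path => /andP[-> _] /=.
rewrite ea /= Hsym eb /=.
by move: ps; rewrite -{1}(cat_take_drop b s) cat_path (last_take x0 hb) => /andP[_ ->].
Qed.

End Walks.

(** * Contraction along a shortest path *)

Section Contraction.
Variables (T : finType) (e : rel T) (nb : T -> seq T).
Hypothesis Hsym : symmetric e.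
Hypothesis Hnb : nb_order e nb.
Variables (L : load T) (acc : T -> option T).
Hypothesis Hacc : valid_acc nb L acc.

Definition target_flow u := oapp (fun y => received L acc y ^ 2) 0 (target nb L u).

(** A gap g across an edge forces the target of its upper end to receive at
    least ⌊g/2⌋, whence (g − 1)² ≤ 4·target_flow. *)
Lemma edge_gap_flow u v : e u v -> (L u - L v - 1) ^ 2 <= 4 * target_flow u.
Proof.
move=> euv; set g := L u - L v.
have half_flow : (g %/ 2) ^ 2 <= target_flow u.
  case: (leqP 2 g) => hg; last by rewrite divn_small.
  have [y [ty hy]] := target_exists Hnb euv (ltac:(lia) : L v + 2 <= L u).
  have [w hw] := acc_exists Hacc ty.
  rewrite /target_flow ty /= /received hw leq_sqr.
  by apply: leq_trans (acc_max Hacc hw ty); apply: leq_div2r.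
have := divn_eq g 2; have := ltn_pmod g (isT : 0 < 2); nia.
Qed.

(** On a shortest walk, a node is the target of at most 3 walk nodes
    (they are all adjacent to it), so the flows along the walk add up to at
    most 3·Σ_y received². *)
Lemma walk_flow (x0 : T) (s : seq T) :
  path e x0 s -> (forall j, j < size s -> ~~ walkb e j x0 (last x0 s)) ->
  \sum_(i < size s) target_flow (nth x0 (x0 :: s) i) <= 3 * \sum_y received L acc y ^ 2.
Proof.
move=> ps Hmin; set k := size s; pose node i := nth x0 (x0 :: s) i.
have flow_split u : target_flow u =
    \sum_y (target nb L u == Some y) * received L acc y ^ 2.
  rewrite /target_flow; case: (target nb L u) => [y0|] /=; last by rewrite big1.
  rewrite (bigD1 y0) //= eqxx mul1n big1 ?addn0 // => y ne.
  by case: eqP => // -[E]; rewrite E eqxx in ne.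
rewrite (eq_bigr _ (fun i _ => flow_split _)).
rewrite exchange_big big_distrr /=; apply: leq_sum => y _.
rewrite -big_distrl /= leq_mul2r; apply/orP; right.
set c := fun i => target nb L (node i) == Some y.
have -> : \sum_(i < k) (target nb L (node i) == Some y) = count c (iota 0 k).
  rewrite -(big_mkord xpredT (fun i => nat_of_bool (c i))) /index_iota subn0.
  rewrite -sum1_count [in RHS]big_mkcond.
  by apply: eq_bigr => i _ /=; case: (c i).
apply: count_clustered => a b ha hb ca cb hab; rewrite ltnNge; apply/negP => hab3.
have [ea _ _] := target_spec Hnb (eqP ca).
have [eb _ _] := target_spec Hnb (eqP cb).
have [j [hj wj]] := shortcut Hsym ps (ltnW hb) hab3 ea eb.
by move: (Hmin j hj); rewrite wj.
Qed.

Lemma contraction (x0 : T) (s : seq T) :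
  path e x0 s -> (forall j, j < size s -> ~~ walkb e j x0 (last x0 s)) ->
  (L x0 - L (last x0 s) - size s) ^ 2 <=
    6 * size s * (\sum_u L u ^ 2 - \sum_u Defs.next L acc u ^ 2).
Proof.
move=> ps Hmin; set k := size s; pose node i := nth x0 (x0 :: s) i.
pose excess i := L (node i) - L (node i.+1) - 1.
have total_excess : L x0 - L (last x0 s) - k <= \sum_(i < k) excess i.
  have := telescope (fun i => L (node i)) k.
  have -> : node k = last x0 s by rewrite /node (last_nth x0).
  have : \sum_(i < k) (L (node i) - L (node i.+1)) <= \sum_(i < k) (excess i + 1).
    by apply: leq_sum => i _; rewrite /excess; lia.
  by rewrite big_split /= sum1_card card_ord; change (node 0) with x0; lia.
have excess_flow : \sum_(i < k) excess i ^ 2 <= 4 * \sum_(i < k) target_flow (node i).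
  rewrite big_distrr; apply: leq_sum => i _; apply: edge_gap_flow.
  by move/(pathP x0): ps => /(_ i (ltn_ord i)).
have flow_received := walk_flow ps Hmin.
have drop := sumsq_next Hnb Hacc.
rewrite -leq_sqr in total_excess.
apply: (leq_trans total_excess); apply: (leq_trans (cauchy_schwarz_ord k excess)).
rewrite -mulnA mulnCA leq_mul2l; apply/orP; right.
apply: (leq_trans excess_flow); move: flow_received drop; rewrite -/k.
change (nth x0 (x0 :: s)) with node; lia.
Qed.

End Contraction.

(** * The potential  Ψ(L) = n·Σ L² − (Σ L)² *)

Section Potential.
Variable T : finType.

Definition total (L : load T) := \sum_u L u.
Definition sumsq (L : load T) := \sum_u L u ^ 2.
Definition potential (L : load T) := #|T| * sumsq L - total L ^ 2.

Lemma card_pos_of_potential (L : load T) : 0 < potential L -> 0 < #|T|.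
Proof. by rewrite /potential; case: (posnP #|T|) => [->|//]; rewrite mul0n. Qed.

(** Cauchy–Schwarz: the subtraction in Ψ is exact. *)
Lemma total_sq_le (L : load T) : total L ^ 2 <= #|T| * sumsq L.
Proof. by rewrite /total /sumsq cardT enumT; apply: cauchy_schwarz. Qed.

(** Ψ is translation invariant, and 4Ψ ≤ (nK)² where K is the discrepancy. *)
Lemma potential_bound (L : load T) : 4 * potential L <= (#|T| * discrepancy L) ^ 2.
Proof.
set n := #|T|; set m := Lmin L; set K := discrepancy L; pose b u := L u - m.
have below u : m <= L u by exact: Lmin_le.
have above u : b u <= K.
  have : L u <= Lmax L by apply: leq_bigmax.
  by rewrite /b /K /discrepancy; lia.
have e_sumsq : sumsq L = sumsq b + 2 * m * total b + n * m ^ 2.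
  rewrite /sumsq /total big_distrr -sum_nat_const -!big_split /=.
  by apply: eq_bigr => u _; have := below u; rewrite /b; nia.
have e_total : total L = total b + n * m.
  rewrite /total -sum_nat_const -big_split /=.
  by apply: eq_bigr => u _; have := below u; rewrite /b; lia.
have b_sumsq : sumsq b <= K * total b.
  rewrite /sumsq /total big_distrr; apply: leq_sum => u _.
  by rewrite expnS expn1 leq_mul2r above orbT.
have shift : potential L = n * sumsq b - total b ^ 2.
  rewrite /potential e_sumsq e_total -/n.
  have -> : n * (sumsq b + 2 * m * total b + n * m ^ 2) =
            n * sumsq b + (2 * n * m * total b + n ^ 2 * m ^ 2) by ring.
  have -> : (total b + n * m) ^ 2 = total b ^ 2 + (2 * n * m * total b + n ^ 2 * m ^ 2) by ring.
  by rewrite subnDr.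
rewrite shift; have := amgm (n * K) (2 * total b).
have : n * sumsq b <= n * (K * total b) by rewrite leq_mul2l b_sumsq orbT.
nia.
Qed.

Lemma potential_small (L : load T) d : discrepancy L <= 2 * d -> potential L <= #|T| ^ 2 * d ^ 2.
Proof.
move=> hK; have := potential_bound L.
have : (#|T| * discrepancy L) ^ 2 <= (#|T| * (2 * d)) ^ 2 by rewrite leq_sqr leq_mul2l hK orbT.
rewrite !expnMn; lia.
Qed.

End Potential.

Lemma Lmax_attained (T : finType) (L : load T) : 0 < #|T| -> exists u, L u = Lmax L.
Proof. by move=> h; case: (eq_bigmax L h) => u hu; exists u; rewrite /Lmax hu. Qed.

Lemma Lmin_attained (T : finType) (L : load T) : 0 < #|T| -> exists u, L u = Lmin L.
Proof.
move=> /card_gt0P[u0 _]; pose um := [arg min_(i < u0) L i].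
have hm i : L um <= L i by rewrite /um; case: arg_minnP => // j _; apply.
exists um; apply/eqP; rewrite eqn_leq Lmin_le andbT /Lmin.
apply: (big_ind (fun x => L um <= x)) => [|x y hx hy|i _]; last exact: hm.
- exact: leq_bigmax.
- by rewrite leq_min hx hy.
Qed.

Section Execution.
Variables (T : finType) (e : rel T) (nb : T -> seq T).
Variables (X : nat -> load T) (A : nat -> T -> option T).
Hypothesis Hsym : symmetric e.
Hypothesis Hconn : connected_graph e.
Hypothesis Hnb : nb_order e nb.
Hypothesis Hex : execution nb X A.

Let n := #|T|.
Let D := diameter e.

Lemma monotonic :
  (forall t u w, A t u = Some w -> X t u < X t w) /\
  (forall t, Lmax (X t.+1) <= Lmax (X t) /\ Lmin (X t) <= Lmin (X t.+1)).
Proof.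
split=> [t u w h | t]; case: (Hex t) => hv hnext.
  by have := target_gap Hnb (acc_target hv h); lia.
by rewrite hnext; split; [exact: (Lmax_next Hnb hv) | exact: (Lmin_next Hnb hv)].
Qed.

Lemma total_invariant t : total (X t) = total (X 0).
Proof. by elim: t => // t <-; case: (Hex t) => hv ->; exact: (sum_next Hnb hv). Qed.

Lemma sumsq_round t :
  sumsq (X t.+1) + 2 * \sum_v received (X t) (A t) v ^ 2 <= sumsq (X t).
Proof. by case: (Hex t) => hv ->; exact: (sumsq_next Hnb hv). Qed.

(** Ψ drops by n times the drop of Σ L² (the total load being constant). *)
Lemma potential_drop t :
  potential (X t.+1) + n * (sumsq (X t) - sumsq (X t.+1)) = potential (X t).
Proof.
have cs := total_sq_le (X t.+1); have := sumsq_round t.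
rewrite /potential !total_invariant in cs * => hsq.
have : n * sumsq (X t.+1) <= n * sumsq (X t) by rewrite leq_mul2l; apply/orP; right; lia.
rewrite mulnBr -/n; lia.
Qed.

Lemma balanced_forever t : one_balanced e (X t) -> forall s, t <= s -> forall u, X s u = X t u.
Proof.
move=> hb s /subnKC <-; elim: (s - t) => [|k IH] u; first by rewrite addn0.
case: (Hex (t + k)) => hv hnext.
rewrite addnS hnext (next_balanced Hnb hv) ?IH // => v w evw; rewrite !IH; exact: hb.
Qed.

(** In an unbalanced state some edge has a gap ≥ 2, so a positive amount
    moves and Σ L² drops by at least 2. *)
Lemma unbalanced_drop t : ~ one_balanced e (X t) -> sumsq (X t.+1) + 2 <= sumsq (X t).
Proof.
move=> unbal.
have [u [v [euv gap]]] : exists u v, e u v /\ X t v + 2 <= X t u.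
  case: (boolP [exists u, exists v, e u v && (X t v + 2 <= X t u)]).
    by move=> /existsP[u /existsP[v /andP[euv h]]]; exists u, v.
  move=> none; exfalso; apply: unbal => u v euv.
  have no_gap x y : e x y -> ~~ (X t y + 2 <= X t x).
    by move=> exy; apply: contra none => h; apply/existsP; exists x; apply/existsP; exists y; rewrite exy.
  by move: (no_gap u v euv) (no_gap v u (etrans (Hsym v u) euv)); lia.
case: (Hex t) => hv _.
have [y [ty hy]] := target_exists Hnb euv gap.
have [w hw] := acc_exists hv ty.
have moved : 1 <= received (X t) (A t) y.
  rewrite /received hw; apply: leq_trans (acc_max hv hw ty); rewrite /pval.
  by have := target_gap Hnb ty; rewrite divn_gt0 //; lia.
have : 1 <= \sum_v received (X t) (A t) v ^ 2 by rewrite (bigD1 y) //=; nia.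
have := sumsq_round t; lia.
Qed.

(** ** Phase 1: geometric decrease while Ψ > n²D² *)

Lemma phase1_step t : n ^ 2 * D ^ 2 < potential (X t) ->
  6 * n * D * potential (X t.+1) + potential (X t) <= 6 * n * D * potential (X t).
Proof.
move=> big_pot; set K := discrepancy (X t); set drop := sumsq (X t) - sumsq (X t.+1).
have hn : 0 < n by apply: (card_pos_of_potential (L := X t)); lia.
have hK : 2 * D < K by rewrite ltnNge; apply: contraTN big_pot => /potential_small; rewrite -leqNgt.
have [umax hmax] := Lmax_attained (X t) hn.
have [umin hmin] := Lmin_attained (X t) hn.
have [s [ps ls ss Hmin]] := shortest_walk (Hconn umax umin).
have hk : size s <= D by rewrite ss; apply: dist_le_diameter.
case: (Hex t) => hv hnext.
have := contraction Hsym Hnb hv ps; rewrite ls hmax hmin -hnext => /(_ Hmin) contr.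
have contr_D : K ^ 2 <= 4 * (6 * D * drop).
  have : K <= 2 * (K - size s) by lia.
  rewrite -leq_sqr expnMn => /leq_trans; apply; rewrite leq_mul2l; apply/orP; right.
  by apply: leq_trans contr _; rewrite leq_mul2r leq_mul2l hk !orbT.
have := potential_bound (X t); rewrite -/K -/n expnMn => bound.
have : n ^ 2 * K ^ 2 <= n ^ 2 * (4 * (6 * D * drop)) by rewrite leq_mul2l contr_D orbT.
have -> : n ^ 2 * (4 * (6 * D * drop)) = 4 * (6 * n * D * (n * drop)) by ring.
have drop_eq := potential_drop t; rewrite -/drop in drop_eq.
rewrite -{2}drop_eq mulnDr; lia.
Qed.

Lemma decay t : (forall t', t' < t -> n ^ 2 * D ^ 2 < potential (X t')) ->
  (6 * n * D) ^ t * potential (X t) <= (6 * n * D - 1) ^ t * potential (X 0).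
Proof.
elim: t => [|t IH] H; first by rewrite !expn0 !mul1n.
set c := 6 * n * D; set d := c - 1.
have step : c * potential (X t.+1) <= d * potential (X t).
  by have := phase1_step (H t (ltnSn t)); rewrite /d mulnBl mul1n -/c; lia.
have IHt := IH (fun t' ht' => H t' (ltn_trans ht' (ltnSn t))); rewrite -/c -/d in IHt.
have -> : c ^ t.+1 * potential (X t.+1) = c ^ t * (c * potential (X t.+1)) by rewrite expnS; ring.
apply: leq_trans (leq_mul (leqnn _) step) _.
have -> : c ^ t * (d * potential (X t)) = d * (c ^ t * potential (X t)) by ring.
by rewrite expnS -mulnA leq_mul2l IHt orbT.
Qed.

Lemma phase1_exists : exists t, potential (X t) <= n ^ 2 * D ^ 2.
Proof.
have descent m : (exists t, potential (X t) <= n ^ 2 * D ^ 2) \/ potential (X m) + m <= potential (X 0).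
  elim: m => [|m [found|IH]]; [by right; rewrite addn0 | by left | ].
  case: (leqP (potential (X m)) (n ^ 2 * D ^ 2)) => h; first by left; exists m.
  right; have := phase1_step h.
  case: (leqP (potential (X m)) (potential (X m.+1))) => [le|]; last by lia.
  by have : 6 * n * D * potential (X m) <= 6 * n * D * potential (X m.+1); [rewrite leq_mul2l le orbT | lia].
by case: (descent (potential (X 0)).+1) => //; lia.
Qed.

Lemma phase1_length m : 0 < D -> (forall t, t <= m -> n ^ 2 * D ^ 2 < potential (X t)) ->
  4 * D ^ 2 * (6 * n * D) ^ m < discrepancy (X 0) ^ 2 * (6 * n * D - 1) ^ m.
Proof.
move=> hD big_pot; set c := 6 * n * D; set d := c - 1; set K := discrepancy (X 0).
have hn : 0 < n by apply: (card_pos_of_potential (L := X m)); have := big_pot m (leqnn m); lia.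
have hd := decay (fun t' ht' => big_pot t' (ltnW ht')); rewrite -/c -/d in hd.
have hc : 0 < c ^ m by rewrite expn_gt0 /c; lia.
have h1 : c ^ m * (n ^ 2 * D ^ 2) < c ^ m * potential (X m) by rewrite ltn_pmul2l ?big_pot.
have h2 : d ^ m * (4 * potential (X 0)) <= d ^ m * (n ^ 2 * K ^ 2).
  by rewrite leq_mul2l -expnMn potential_bound orbT.
have : n ^ 2 * (4 * D ^ 2 * c ^ m) < n ^ 2 * (K ^ 2 * d ^ m).
  have -> : n ^ 2 * (4 * D ^ 2 * c ^ m) = 4 * (c ^ m * (n ^ 2 * D ^ 2)) by ring.
  have -> : n ^ 2 * (K ^ 2 * d ^ m) = d ^ m * (n ^ 2 * K ^ 2) by ring.
  have : d ^ m * (4 * potential (X 0)) = 4 * (d ^ m * potential (X 0)) by ring.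
  lia.
by rewrite ltn_pmul2l // expn_gt0 hn.
Qed.

(** ** Phase 2: each unbalanced round lowers Ψ by at least 2n *)

Lemma phase2_step t : ~ one_balanced e (X t) -> potential (X t.+1) + 2 * n <= potential (X t).
Proof.
move=> unbal; have drop2 := unbalanced_drop unbal; have := potential_drop t.
have : n * 2 <= n * (sumsq (X t) - sumsq (X t.+1)) by rewrite leq_mul2l; apply/orP; right; lia.
lia.
Qed.

Lemma phase2 B s : potential (X s) <= B -> 0 < n ->
  exists j, 2 * n * j <= B /\ one_balanced e (X (s + j)).
Proof.
move=> + hn; elim/ltn_ind: B s => B IH s hB.
case: (classic (one_balanced e (X s))) => [bal | unbal]; first by exists 0; rewrite addn0 muln0.
have := phase2_step unbal => hs.
have [j [hj bal]] := IH (B - 2 * n) (ltac:(lia)) s.+1 (ltac:(lia)).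
by exists j.+1; rewrite addnS -addSn mulnS; split; first by lia.
Qed.

End Execution.

Lemma phase2_length n D j : 0 < n -> 0 < D -> 2 * n * j <= n ^ 2 * D ^ 2 -> j.+1 <= 2 * n * D ^ 2.
Proof.
move=> hn hD.
have -> : n ^ 2 * D ^ 2 = n * (n * D ^ 2) by ring.
rewrite -mulnA mulnCA leq_pmul2l // => hj.
have : 0 < n * D ^ 2 by rewrite muln_gt0 expn_gt0 hn hD.
lia.
Qed.

Lemma ceil_ratio n K D : 1 < n -> 0 < D -> 0 < K ->
  0 < (n * K ^ 2 + 2 * D ^ 2 - 1) %/ (2 * D ^ 2) /\
  K ^ 2 <= 4 * D ^ 2 * ((n * K ^ 2 + 2 * D ^ 2 - 1) %/ (2 * D ^ 2)).
Proof.
move=> hn hD hK; set N := _ %/ _.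
have hD2 : 0 < 2 * D ^ 2 by rewrite muln_gt0 expn_gt0 hD.
have ceil : n * K ^ 2 <= N * (2 * D ^ 2).
  have := divn_eq (n * K ^ 2 + 2 * D ^ 2 - 1) (2 * D ^ 2).
  have := ltn_pmod (n * K ^ 2 + 2 * D ^ 2 - 1) hD2; rewrite -/N; lia.
have hK2 : 0 < K ^ 2 by rewrite expn_gt0 hK.
have : 2 * K ^ 2 <= n * K ^ 2 by rewrite leq_mul2r hn orbT.
split; last by nia.
by rewrite lt0n; apply: contraTneq ceil => ->; rewrite mul0n -ltnNge muln_gt0 hK2 ltnW.
Qed.

Section RealBound.
Local Open Scope R_scope.

Lemma INR_muln m k : INR (m * k)%N = INR m * INR k.
Proof. by rewrite -multE mult_INR. Qed.

Lemma INR_expn m k : INR (m ^ k)%N = INR m ^ k.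
Proof. by elim: k => [|k IH] //=; rewrite expnS INR_muln IH. Qed.

Lemma INR_leq m k : (m <= k)%N -> INR m <= INR k.
Proof. by move/leP; apply: le_INR. Qed.

Lemma ln_le x y : 0 < x -> x <= y -> ln x <= ln y.
Proof.
move=> hx; case/Rle_lt_or_eq_dec => [lt|<-]; last exact: Rle_refl.
exact/Rlt_le/ln_increasing.
Qed.

(** ln (a − 1) ≤ ln a − 1/a, from 1 − 1/a ≤ exp (−1/a). *)
Lemma ln_pred a : 1 < a -> ln (a - 1) <= ln a - / a.
Proof.
move=> ha.
have inv_lt1 : / a < 1 by rewrite -Rinv_1; apply: Rinv_lt_contravar; lra.
have -> : a - 1 = a * (1 + - / a).
  by rewrite Rmult_plus_distr_l Rmult_1_r -Ropp_mult_distr_r Rinv_r; lra.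
rewrite ln_mult; try lra.
have : ln (1 + - / a) <= - / a.
  by rewrite -{2}(ln_exp (- / a)); apply: ln_le; [lra | exact: exp_ineq1_le].
lra.
Qed.

(** A geometric sequence of ratio 1 − 1/a exceeds 1/N for fewer than
    a·ln N steps: a^m < N(a − 1)^m implies m < a·ln N. *)
Lemma escape_time a N m : 1 < a -> 0 < N -> a ^ m < N * (a - 1) ^ m -> INR m < a * ln N.
Proof.
move=> ha hN hm.
have := ln_increasing _ _ (pow_lt a m ltac:(lra)) hm.
rewrite ln_mult ?ln_pow; try lra; last by apply: pow_lt; lra.
have : INR m * ln (a - 1) <= INR m * (ln a - / a).
  by apply: Rmult_le_compat_l; [apply: pos_INR | apply: ln_pred].
move=> hpred hlt.
have : INR m * / a < ln N by lra.
move=> /(Rmult_lt_compat_l a _ _ ltac:(lra)).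
by rewrite Rmult_comm Rmult_assoc Rinv_l; lra.
Qed.

(** The two phases together: t1 rounds of phase 1 (each of which had not
    yet pushed Ψ below n²D²) followed by j < 2nD² rounds of phase 2. *)
Lemma time_bound n D K N t1 j : (1 < n)%N -> (0 < D)%N -> (0 < N)%N ->
  (K ^ 2 <= 4 * D ^ 2 * N)%N ->
  (forall m, m < t1 -> 4 * D ^ 2 * (6 * n * D) ^ m < K ^ 2 * (6 * n * D - 1) ^ m)%N ->
  (j.+1 <= 2 * n * D ^ 2)%N ->
  INR (t1 + j) <= INR (8 * n * D + 1) * ln (INR N) + INR (2 * n * D ^ 2).
Proof.
move=> hn hD hN hKN phase1 hj.
set c := (6 * n * D)%N.
have hc : (1 < c)%N by rewrite /c; nia.
have ln_N : 0 <= ln (INR N).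
  by rewrite -ln_1; apply: ln_le; [lra | apply: (INR_leq hN)].
have phase1_time : INR t1 <= INR c * ln (INR N) + 1.
  case: t1 phase1 => [|m] phase1.
    by have := Rmult_le_pos _ _ (pos_INR c) ln_N; simpl; lra.
  have : (c ^ m < N * (c - 1) ^ m)%N.
    have := phase1 m (ltnSn m); rewrite -/c => h.
    have : (K ^ 2 * (c - 1) ^ m <= 4 * D ^ 2 * N * (c - 1) ^ m)%N by rewrite leq_mul2r hKN orbT.
    move=> hK; have : (4 * D ^ 2 * c ^ m < 4 * D ^ 2 * (N * (c - 1) ^ m))%N by lia.
    by rewrite ltn_pmul2l // muln_gt0 expn_gt0 hD.
  move=> /ltP /lt_INR; rewrite INR_muln !INR_expn minus_INR; last by apply/leP; lia.
  have hc1 : 1 < INR c by apply: (lt_INR 1); apply/ltP; lia.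
  have hN0 : 0 < INR N by apply: (lt_INR 0); apply/ltP.
  by move=> /(escape_time hc1 hN0); rewrite S_INR; lra.
have hjR := INR_leq hj; rewrite S_INR in hjR.
have : INR c * ln (INR N) <= INR (8 * n * D + 1) * ln (INR N).
  by apply: Rmult_le_compat_r => //; apply: INR_leq; rewrite /c; lia.
have -> : INR (t1 + j) = INR t1 + INR j by rewrite -plusE plus_INR.
lra.
Qed.

End RealBound.

Theorem theorem2 (T : finType) (e : rel T) (nb : T -> seq T)
  (X : nat -> load T) (A : nat -> T -> option T) :
  simple_graph e -> connected_graph e -> nb_order e nb ->
  execution nb X A ->
  (* monotonicity *)
  ((forall t u w, A t u = Some w -> X t u < X t w) /\
   (forall t, Lmax (X t.+1) <= Lmax (X t) /\ Lmin (X t) <= Lmin (X t.+1))) /\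
  (* convergence bound *)
  (2 <= #|T| ->
   let n := #|T| in
   let D := diameter e in
   let K := discrepancy (X 0) in
   exists t : nat,
     (if 2 * D <= K then
        Rle (INR t) (Rplus (Rmult (INR (8 * n * D + 1))
                  (ln (INR ((n * K ^ 2 + 2 * D ^ 2 - 1) %/ (2 * D ^ 2))))) (INR (2 * n * D ^ 2)))
      else t <= 2 * n * D ^ 2) /\
     one_balanced e (X t) /\
     (forall s, t <= s -> forall u, X s u = X t u)).
Proof.
move=> [Hsym _] Hconn Hnb Hex; split; first exact: (monotonic Hnb Hex).
move=> hn2 n D K; have hn : 0 < n by lia.
have hD : 0 < D by exact: (diameter_pos Hconn hn2).
case: (leqP (2 * D) K) => hK; last first.
  (* small discrepancy: phase 2 only *)
  have small := potential_small (ltnW hK).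
  have [j [hj bal]] := phase2 Hsym Hnb Hex small hn.
  exists j; split; first by have := phase2_length hn hD hj; lia.
  by split; last exact: (balanced_forever Hnb Hex bal).
(* phase 1 until Ψ ≤ n²D², then phase 2 *)
have [t1 low1 first1] := ex_minnP (phase1_exists Hsym Hconn Hnb Hex).
have [j [hj bal]] := phase2 Hsym Hnb Hex low1 hn.
exists (t1 + j); split; last by split; last exact: (balanced_forever Hnb Hex bal).
have [hN hKN] := ceil_ratio hn2 hD (ltac:(lia) : 0 < K).
apply: (time_bound hn2 hD hN hKN _ (phase2_length hn hD hj)) => m hm.
apply: (phase1_length Hsym Hconn Hnb Hex hD) => t ht.
by rewrite ltnNge; apply/negP => /first1; lia.
Qed.
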